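(* Let $\Delta$ be a foliation on a Hausdorff topological manifold $X$, let $Y$ be the space of leaves of $\Delta$ endowed with the quotient topology with respect to the natural projection $p:X\to Y$, and suppose that (a) $Y$ is a $T_1$-space, i.e. each leaf of $\Delta$ is a closed subset of $X$; (b) the set of branch points of $Y$ is locally finite in $Y$. Then the homomorphism $\psi:\mathcal{H}(X,\Delta)\to\mathcal{H}(Y)$ is continuous with respect to the compact open topologies on $\mathcal{H}(X,\Delta)$ and $\mathcal{H}(Y)$.
   Context: $p:X\to Y$ sends $x$ to the leaf containing $x$; a set $A\subset Y$ is open iff $p^{-1}(A)$ is open in $X$. $\mathcal{H}(X,\Delta)$ is the group of foliated homeomorphisms of $X$ (homeomorphisms $h$ such that $h$ maps each leaf onto a leaf), and $\mathcal{H}(Y)$ is the group of homeomorphisms of $Y$; both carry the compact open topology, generated by the subbasic sets $\{f : f(K)\subset U\}$ with $K$ compact and $U$ open. For $h\in\mathcal{H}(X,\Delta)$, $\psi(h):Y\to Y$ is the unique map with $p\circ h=\psi(h)\circ p$ (it is a homeomorphism of $Y$). Two points $y,z\in Y$ are $T_2$-disjoint if they have disjoint neighborhoods; $y\in Y$ is a branch point if there exists $z\neq y$ in $Y$ that is not $T_2$-disjoint from $y$. A subset $A\subset Y$ is locally finite if every point of $Y$ has a neighborhood $U$ with $U\cap A$ finite. *)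

From HB Require Import structures.
From mathcomp Require Import all_boot all_order all_algebra.
From mathcomp Require Import all_classical all_reals all_analysis.
Import numFieldNormedType.Exports.
Set Implicit Arguments. Unset Strict Implicit. Unset Printing Implicit Defensive.
Import Order.TTheory GRing.Theory Num.Theory.
Local Open Scope classical_set_scope.
Local Open Scope ring_scope.

Section defs.
Variable R : realType.

Definition path_in (X : topologicalType) (A : set X) (x y : X) :=
  exists f : R -> X, [/\ {within `[0, 1], continuous f}, f 0 = x, f 1 = y &
                         f @` `[0, 1] `<=` A].

Definition path_connected_set (X : topologicalType) (A : set X) :=
  forall x y, A x -> A y -> path_in A x y.

Definition path_component (X : topologicalType) (A : set X) (x : X) :=
  [set y | path_in A x y].

Definition is_path_component (X : topologicalType) (A C : set X) :=
  exists2 x, A x & C = path_component A x.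

Definition open_embedding_onto (S X : topologicalType) (phi : S -> X) (U : set X) :=
  [/\ injective phi, continuous phi, open U, range phi = U &
      forall A : set S, open A -> open (phi @` A)].

Definition topological_manifold (X : topologicalType) :=
  hausdorff_space X /\
  exists n : nat, forall x : X, exists (U : set X) (phi : 'rV[R]_n -> X),
      U x /\ open_embedding_onto phi U.

(** A foliated chart of [D] (leaves of dimension q, codimension p). *)
Definition foliated_chart (X : topologicalType) (D : set (set X)) (p q : nat)
    (U : set X) (phi : 'rV[R]_p * 'rV[R]_q -> X) :=
  open_embedding_onto phi U /\
  forall L, D L -> forall C, is_path_component (L `&` U) C ->
    exists v : 'rV[R]_p, C = phi @` [set (v, w) | w in [set: 'rV[R]_q]].

Definition foliation (X : topologicalType) (D : set (set X)) :=
  [/\ forall L, D L -> L !=set0 /\ path_connected_set L,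
      forall x : X, exists2 L, D L & L x,
      forall L M, D L -> D M -> L `&` M !=set0 -> L = M &
      exists p q : nat, forall x : X, exists U phi,
        U x /\ @foliated_chart X D p q U phi].
End defs.

(** The leaf of [D] containing [x] (well-defined when [D] is a partition). *)
Definition leaf_of (X : Type) (D : set (set X)) (x : X) : set X :=
  get [set L | D L /\ L x].

Section leafspace.
Context {X : topologicalType} (D : set (set X)).

Definition same_leaf : rel X := fun x y => `[< leaf_of D x = leaf_of D y >].

Lemma same_leaf_refl : reflexive same_leaf.
Proof. by move=> x; apply/asboolP. Qed.
Lemma same_leaf_sym : symmetric same_leaf.
Proof. by move=> x y; apply/asboolP/asboolP => ->. Qed.
Lemma same_leaf_trans : transitive same_leaf.
Proof. by move=> y x z /asboolP h1 /asboolP h2; apply/asboolP; rewrite h1 h2. Qed.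

Local Open Scope quotient_scope.
Definition same_leaf_equiv : equiv_rel X :=
  EquivRel same_leaf same_leaf_refl same_leaf_sym same_leaf_trans.

Definition leaf_space : topologicalType :=
  quotient_topology {eq_quot same_leaf_equiv}.

Definition leaf_proj : X -> leaf_space := \pi_leaf_space.

(** psi(h) : Y -> Y with p \o h = psi(h) \o p (for foliated h). *)
Definition leaf_map (h : X -> X) : leaf_space -> leaf_space :=
  fun y => leaf_proj (h (repr y)).
End leafspace.

Definition homeomorphism (T : topologicalType) (h : T -> T) :=
  exists g : T -> T, [/\ cancel h g, cancel g h, continuous h & continuous g].

Definition foliated_homeo (X : topologicalType) (D : set (set X)) (h : X -> X) :=
  homeomorphism h /\ forall L, D L -> D (h @` L).

Definition T2_disjoint (Y : topologicalType) (y z : Y) :=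
  exists U V : set Y, [/\ nbhs y U, nbhs z V & U `&` V = set0].

Definition branch_point (Y : topologicalType) (y : Y) :=
  exists z, z <> y /\ ~ T2_disjoint y z.

Definition locally_finite (Y : topologicalType) (A : set Y) :=
  forall y : Y, exists U : set Y, nbhs y U /\ finite_set (U `&` A).

Arguments leaf_map {X} D h _.
Arguments leaf_proj {X} D _.

From HB Require Import structures.
From mathcomp Require Import all_boot all_order all_algebra finmap.
From mathcomp Require Import all_classical all_reals all_analysis.
From mathcomp Require Import lra.
Import numFieldNormedType.Exports.
Import Order.TTheory GRing.Theory Num.Theory.
Local Open Scope classical_set_scope.
Set Implicit Arguments. Unset Strict Implicit. Unset Printing Implicit Defensive.

(* The argument only uses that the leaf projection p : X -> Y is an OPEN map and
   that X is locally compact. Interval facts: a predicate on [0, 1] that is locally constant is constant.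
   2. A manifold is locally compact (small coordinate boxes are compact).
   3. p is open: if S is saturated (a union of leaves), the interior of S is
      saturated too.  Inside a foliated chart the interior property is constant
      along a plaque; a leaf is path connected and a path in it lies, near each
      of its times, in a single plaque, so by step 1 the interior property
      propagates along the whole leaf.  The saturation p^-1(p(W)) of an open W
      is then open.
   4. By local compactness and openness of p, every compact K of Y lying in
      p(V), V open, lies in p(C) for some compact C contained in V.
   5. If psi(h)(K) is in O, lift K into C inside V := h^-1(p^-1(O)); the
      compact-open neighbourhood {g | g(C) in p^-1(O)} of h is mapped by psi
      into {f | f(K) in O}, because psi(g) o p = p o g. *)

Section unit_segment.
Variable R : realType.
Local Open Scope ring_scope.
Implicit Types t s u : R.

Lemma itv01P u : `[0, 1]%classic u <-> 0 <= u <= 1.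
Proof. by rewrite /= in_itv. Qed.

Lemma itv01_0 : `[0, 1]%classic (0 : R).
Proof. by apply/itv01P; rewrite lexx ler01. Qed.

Lemma itv01_1 : `[0, 1]%classic (1 : R).
Proof. by apply/itv01P; rewrite lexx ler01. Qed.

Definition seg_point t s u := t + u * (s - t).

Lemma seg_point0 t s : seg_point t s 0 = t.
Proof. by rewrite /seg_point mul0r addr0. Qed.

Lemma seg_point1 t s : seg_point t s 1 = s.
Proof. by rewrite /seg_point mul1r addrC subrK. Qed.

Lemma seg_point_continuous t s : continuous (seg_point t s).
Proof.
move=> u; apply: (@continuousD _ R^o R (fun _ => t) (fun u => u * (s - t)) u).
  exact: cst_continuous.
by apply: (@continuousM R R id (fun _ => s - t)); [exact: cvg_id|exact: cst_continuous].
Qed.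

Lemma seg_point01 t s u : `[0, 1]%classic t -> `[0, 1]%classic s ->
  `[0, 1]%classic u -> `[0, 1]%classic (seg_point t s u).
Proof.
move=> /itv01P/andP[? ?] /itv01P/andP[? ?] /itv01P/andP[? ?].
by apply/itv01P/andP; split; rewrite /seg_point; nra.
Qed.

Lemma seg_point_ball t s u e : `[0, 1]%classic u -> ball t e s ->
  ball t e (seg_point t s u).
Proof.
move=> /itv01P/andP[u0 u1]; rewrite -!ball_normE /ball_ /seg_point /= => h.
rewrite opprD addrA subrr sub0r normrN normrM (ger0_norm u0) distrC.
by apply: le_lt_trans h; rewrite ler_piMl.
Qed.

Lemma subpath_continuous (T : topologicalType) (f : R -> T) t s :
  {within `[0, 1], continuous f} -> `[0, 1]%classic t -> `[0, 1]%classic s ->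
  {within `[0, 1], continuous (f \o seg_point t s)}.
Proof.
move=> /subspace_continuousP cf t01 s01; apply/subspace_continuousP => u u01 N nN.
have : nbhs u (fun v => `[0, 1]%classic (seg_point t s v) -> N (f (seg_point t s v))).
  exact: seg_point_continuous (cf _ (seg_point01 t01 s01 u01) N nN).
by apply: filterS => v h v01; exact: h (seg_point01 t01 s01 v01).
Qed.

(* [0, 1] is connected, so a locally constant predicate on it is constant. *)
Lemma segment_locally_constant (P : R -> Prop) :
  (forall t, `[0, 1]%classic t ->
     \forall s \near t, `[0, 1]%classic s -> (P s <-> P t)) ->
  P 0 -> P 1.
Proof.
move=> loc P0.
have full : `[0, 1]%classic `&` P = `[0, 1]%classic.
  apply: (@segment_connected R 0 1); first by exists 0; split => //; exact: itv01_0.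
  - exists (interior [set s | `[0, 1]%classic s -> P s]); first exact: open_interior.
    apply/seteqP; split => s; last by case=> s01 /interior_subset h; split => //; exact: h.
    by case=> s01 Ps; split => //; apply: filterS (loc s s01) => r h r01; apply/(h r01).
  - exists (~` interior [set s | `[0, 1]%classic s -> ~ P s]).
      exact/open_closedC/open_interior.
    apply/seteqP; split => s.
      by case=> s01 Ps; split => // /interior_subset h; exact: h s01 Ps.
    case=> s01 nI; split => //; apply: contrapT => nPs; apply: nI.
    by apply: filterS (loc s s01) => r h r01 Pr; apply/nPs/(h r01).
by have [] : (`[0, 1]%classic `&` P) 1 by rewrite full; exact: itv01_1.
Qed.
End unit_segment.

Section coordinate_boxes.
Variables (R : realType) (n : nat).
Local Open Scope ring_scope.

Definition box (v : 'rV[R]_n) (r : R) : set 'rV[R]_n :=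
  [set w | forall i, `[v ord0 i - r, v ord0 i + r]%classic (w ord0 i)].

Lemma box_nbhs (v : 'rV[R]_n) r : 0 < r -> nbhs v (box v r).
Proof.
move=> r0; exists (fun i j => ball (v i j) r); first by move=> i j; exact: nbhsx_ballx.
move=> w /= h i; have := h ord0 i; rewrite -ball_normE /ball_ /= in_itv /=.
by rewrite ltr_distlC => /andP[a b]; apply/andP; split; exact: ltW.
Qed.

Lemma box_compact (v : 'rV[R]_n) r : compact (box v r).
Proof.
exact: (@rV_compact R n (fun i => `[v ord0 i - r, v ord0 i + r]%classic)
  (fun i => @segment_compact R _ _)).
Qed.

Lemma box_sub_ball (v : 'rV[R]_n) e : 0 < e -> box v (e / 2) `<=` ball v e.
Proof.
move=> e0 w h; split => // i j; rewrite -ball_normE /ball_ /= ord1.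
have := h j; rewrite /= in_itv /= => /andP[a b].
have e2 : e / 2 < e by rewrite ltr_pdivrMr // ltr_pMr // ltr1n.
rewrite ltr_distlC; apply/andP; split.
  by apply: lt_le_trans a; rewrite ltrD2l ltrN2 e2.
by apply: le_lt_trans b _; rewrite ltrD2l e2.
Qed.
End coordinate_boxes.

Lemma manifold_locally_compact (R : realType) (X : topologicalType) :
  topological_manifold R X -> forall (x : X) (V : set X), nbhs x V ->
  exists W B : set X, [/\ open W, W x, compact B & W `<=` B /\ B `<=` V].
Proof.
case=> _ [n charts] x V nV.
have [U [phi [Ux [_ cphi _ rU phi_open]]]] := charts x.
have [v _ vx] : range phi x by rewrite rU.
have /nbhs_ballP[e e0 he] : nbhs v (phi @^-1` V) by apply: cphi; rewrite vx.
exists (phi @` (box v (e / 2))°), (phi @` box v (e / 2)); split.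
- exact/phi_open/open_interior.
- by exists v => //; apply/box_nbhs/divr_gt0.
- exact/continuous_compact/box_compact/continuous_subspaceT.
- split; first by move=> _ [w /interior_subset Bw <-]; exists w.
  by move=> _ [w Bw <-]; apply/he/box_sub_ball.
Qed.

(* The library proves the open-cover characterisation of compactness for
   pointed spaces only; it holds in any space (an empty set is trivial). *)
Lemma compact_cover_compact (T : topologicalType) (A : set T) :
  compact A -> cover_compact A.
Proof.
have [[t0 _] cA|A0 _] := pselect (A !=set0).
  pose PT : ptopologicalType := HB.pack T (isPointed.Build T t0).
  have cPA : @compact PT A := cA.
  by rewrite compact_cover in cPA.
by move=> I D f _ _; exists fset0 => // x Ax; case: A0; exists x.
Qed.

Lemma open_setXT (T U : topologicalType) (A : set T) :
  open A -> open (A `*` [set: U]).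
Proof.
move=> oA; rewrite openE => -[x y] [/= Ax _].
exists (A, setT) => /=; first by split => //; [exact: open_nbhs_nbhs|exact: filterT].
by move=> [a b] [/= ? ?].
Qed.

Lemma path_in_refl (R : realType) (X : topologicalType) (A : set X) x :
  A x -> path_in R A x x.
Proof.
move=> Ax; exists (fun _ => x); split => //; last by move=> _ [t _ <-].
exact/continuous_subspaceT/cst_continuous.
Qed.

Lemma path_in_endpoint (R : realType) (X : topologicalType) (A : set X) x y :
  path_in R A x y -> A y.
Proof. by case=> f [_ _ <- sub]; apply: sub; exists 1%R => //; exact: itv01_1. Qed.

Section leaf_space_projection.
Variables (R : realType) (X : topologicalType) (D : set (set X)).
Hypothesis foliationD : foliation R D.
Local Notation I01 := (`[0%R, 1%R]%classic : set R).

Lemma leaf_ofP x : D (leaf_of D x) /\ leaf_of D x x.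
Proof.
case: foliationD => _ covered _ _; have [L DL Lx] := covered x.
by have := @getPex _ [set L | D L /\ L x] (ex_intro _ L (conj DL Lx)).
Qed.

Lemma leaf_of_eq L x : D L -> L x -> leaf_of D x = L.
Proof.
move=> DL Lx; case: foliationD => _ _ disjoint _; have [DLx Lxx] := leaf_ofP x.
by apply: disjoint => //; exists x.
Qed.

Lemma leaf_projE x y : leaf_proj D x = leaf_proj D y <-> leaf_of D x = leaf_of D y.
Proof. by split => [/eqquotP/asboolP // | E]; apply/eqquotP/asboolP. Qed.

Lemma leaf_map_proj (h : X -> X) x : (forall L, D L -> D (h @` L)) ->
  leaf_map D h (leaf_proj D x) = leaf_proj D (h x).
Proof.
move=> hD; apply/leaf_projE; set r := repr _.
have : leaf_of D r = leaf_of D x by apply/leaf_projE; rewrite /r /leaf_proj reprK.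
have [DL Lx] := leaf_ofP x; have [_ Lr] := leaf_ofP r => E; rewrite E in Lr.
by rewrite (leaf_of_eq (hD _ DL) (imageP h Lr)) (leaf_of_eq (hD _ DL) (imageP h Lx)).
Qed.

Definition saturated (S : set X) :=
  forall x y, S x -> leaf_of D y = leaf_of D x -> S y.

Lemma plaque_same_leaf p q U (phi : 'rV[R]_p * 'rV[R]_q -> X) a w w' :
  foliated_chart D U phi -> leaf_of D (phi (a, w')) = leaf_of D (phi (a, w)).
Proof.
case=> -[inj _ _ rU _] plaques; set M := leaf_of D (phi (a, w)).
have [DM Mx] := leaf_ofP (phi (a, w)).
have MUx : (M `&` U) (phi (a, w)) by split => //; rewrite -rU; exists (a, w).
have [v Cv] := plaques M DM _ (ex_intro2 _ _ _ MUx erefl).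
have : path_component R (M `&` U) (phi (a, w)) (phi (a, w)) := path_in_refl R MUx.
rewrite Cv => -[_ [w1 _ <-]] /inj[va _].
have : path_component R (M `&` U) (phi (a, w)) (phi (a, w')).
  by rewrite Cv; apply: imageP; exists w'; rewrite // va.
by move/path_in_endpoint => [Mw' _]; exact: leaf_of_eq.
Qed.

(* In a chart all points of a plaque lie on one leaf; hence if a saturated S
   is a neighbourhood of one plaque point, the union of the plaques through a
   transversal neighbourhood of it is an open subset of S containing the whole
   plaque. *)
Lemma plaque_interior p q U (phi : 'rV[R]_p * 'rV[R]_q -> X) (S : set X) a w1 w2 :
  foliated_chart D U phi -> saturated S ->
  S° (phi (a, w1)) -> S° (phi (a, w2)).
Proof.
move=> chart; case: (chart) => -[_ cphi _ _ phi_open] _ satS nS.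
have [[A B] /= [nA nB] sAB] := cphi (a, w1) S nS.
have oO : open (phi @` (A° `*` setT)) by apply/phi_open/open_setXT/open_interior.
apply: (@filterS _ _ _ (phi @` (A° `*` setT))); last first.
  by apply: open_nbhs_nbhs; split => //; exists (a, w2).
move=> _ [[a' w] [/= Aa' _] <-]; apply: (satS (phi (a', w1))).
  by apply: (sAB (a', w1)); split; [exact: interior_subset|exact: nbhs_singleton].
exact: plaque_same_leaf chart.
Qed.

Lemma path_near_plaque L (f : R -> X) t :
  D L -> {within I01, continuous f} -> f @` I01 `<=` L ->
  I01 t ->
  exists p q U (phi : 'rV[R]_p * 'rV[R]_q -> X) v, foliated_chart D U phi /\
    \forall s \near t, I01 s ->
       exists w w', f t = phi (v, w) /\ f s = phi (v, w').
Proof.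
move=> DL cf fL t01; case: foliationD => _ _ _ [p [q charts]].
have Lft : L (f t) by apply: fL; exists t.
have [U [phi [Uft chart]]] := charts (f t); case: (chart) => -[_ _ oU _ _] plaques.
have [v Cv] := plaques _ DL _ (ex_intro2 _ _ (f t) (conj Lft Uft) erefl).
exists p, q, U, phi, v; split => //.
have /nbhs_ballP[e e0 he] := (subspace_continuousP _ _).1 cf t t01 U
  (open_nbhs_nbhs (conj oU Uft)).
apply/nbhs_ballP; exists e => // s ts s01.
have : path_component R (L `&` U) (f t) (f s).
  exists (f \o seg_point t s); split.
  - exact: subpath_continuous.
  - by rewrite /= seg_point0.
  - by rewrite /= seg_point1.
  - move=> _ [u u01 <-]; have su01 := seg_point01 t01 s01 u01; split.
      by apply: fL; exists (seg_point t s u).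
    exact: he _ (seg_point_ball u01 ts) su01.
have : path_component R (L `&` U) (f t) (f t) := path_in_refl R (conj Lft Uft).
by rewrite Cv => -[_ [w _ <-] Et] [_ [w' _ <-] Es]; exists w, w'.
Qed.

(* The interior of a saturated set is saturated: interior points propagate
   along a path joining two points of a leaf. *)
Lemma saturated_interior (S : set X) : saturated S -> saturated S°.
Proof.
move=> satS y x Sy Exy; have [DL Ly] := leaf_ofP y.
have Lx : leaf_of D y x by rewrite -Exy; case: (leaf_ofP x).
case: foliationD => leaves _ _ _; have [_ pathL] := leaves _ DL.
have [f [cf f0 <- fL]] := pathL y x Ly Lx; rewrite -f0 in Sy.
apply: (segment_locally_constant (P := fun t => S° (f t)) _ Sy) => t t01.
have [p [q [U [phi [v [chart near_t]]]]]] := path_near_plaque DL cf fL t01.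
apply: filterS near_t => s h s01; have [w [w' [-> ->]]] := h s01.
by split; exact: plaque_interior chart satS.
Qed.

Lemma leaf_proj_open W : open W -> open (leaf_proj D @` W : set (leaf_space D)).
Proof.
move=> oW; set S := leaf_proj D @^-1` (leaf_proj D @` W).
have satS : saturated S.
  by move=> x y [w Ww Ewx] E; exists w => //; rewrite Ewx; apply/leaf_projE.
suff : open S by [].
rewrite openE => x [w Ww /leaf_projE Ewx].
apply: (saturated_interior satS (x := w)); last by rewrite Ewx.
by apply: filterS (open_nbhs_nbhs (conj oW Ww)) => z Wz; exists z.
Qed.

Lemma compact_lift (K : set (leaf_space D)) (V : set X) :
  topological_manifold R X -> compact K -> open V -> K `<=` leaf_proj D @` V ->
  exists C : set X, [/\ compact C, C `<=` V & K `<=` leaf_proj D @` C].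
Proof.
move=> manX cK oV KV.
have [g hg] : {g : X -> set X * set X & forall x, V x ->
    [/\ open (g x).1, (g x).1 x, compact (g x).2 & (g x).1 `<=` (g x).2 /\ (g x).2 `<=` V]}.
  apply: (choice (P := fun x (WB : set X * set X) => V x ->
    [/\ open WB.1, WB.1 x, compact WB.2 & WB.1 `<=` WB.2 /\ WB.2 `<=` V])) => x.
  have [Vx|nVx] := pselect (V x); last by exists (set0, set0) => /nVx.
  have [W [B h]] := manifold_locally_compact manX (open_nbhs_nbhs (conj oV Vx)).
  by exists (W, B).
have [F FV KF] : finite_subset_cover V (fun x => leaf_proj D @` (g x).1) K.
  apply: (compact_cover_compact cK) => [x Vx|y /KV [x Vx <-]].
    by apply: leaf_proj_open; case: (hg x Vx).
  by exists x => //; exists x => //; case: (hg x Vx).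
exists (\bigcup_(x in [set` F]) (g x).2); split.
- rewrite bigcup_fset big_seq; apply: bigsetU_compact => x Fx.
  by case: (hg x (set_mem (FV _ Fx))).
- move=> z [x Fx gz]; have Vx := set_mem (FV _ Fx).
  by case: (hg x Vx) => _ _ _ [_]; apply.
- move=> y /KF [x Fx [z gz <-]]; exists z => //; exists x => //.
  by case: (hg x (set_mem (FV _ Fx))) => _ _ _ [+ _]; apply.
Qed.
End leaf_space_projection.

Unset Implicit Arguments.
Set Strict Implicit.

Theorem theorem1p1 (R : realType) (X : topologicalType) (D : set (set X)) :
  topological_manifold R X ->
  foliation R D ->
  (forall L : set X, D L -> closed L) ->
  locally_finite [set y : leaf_space D | branch_point y] ->
  {within [set h : {compact-open, X -> X} | foliated_homeo D h],
    continuous (leaf_map D : {compact-open, X -> X} ->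
                             {compact-open, leaf_space D -> leaf_space D})}.
Proof.
move=> manX folD _ _; apply/subspace_continuousP => h [[_ [_ _ ch _]] hD].
apply/compact_open_cvgP => K O cK oO hKO.
set V := h @^-1` (leaf_proj D @^-1` O).
have oV : open V by move/continuousP: ch; apply.
have KV : K `<=` leaf_proj D @` V.
  move=> y Ky; exists (repr y); last by rewrite /leaf_proj reprK.
  by rewrite /V /= -(leaf_map_proj folD _ hD) /leaf_proj reprK; apply: hKO; exists y.
have [C [cC CV KC]] := compact_lift folD manX cK oV KV.
have nN : nbhs h [set g : {compact-open, X -> X} | g @` C `<=` leaf_proj D @^-1` O].
  apply: open_nbhs_nbhs; split; first exact: compact_open_open.
  by move=> _ [x Cx <-]; exact: CV.
suff : nbhs h (fun g : {compact-open, X -> X} => foliated_homeo D g ->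
   leaf_map D g @` K `<=` O) by [].
apply: filterS nN => g gCO [_ gD] _ [y /KC [x Cx <-] <-].
by rewrite (leaf_map_proj folD _ gD); apply: gCO; exists x.
Qed.
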